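(* Let $n\geq 1$. The classes $\alpha^{\mathrm{sgn}}_{\mathcal D}=\frac{1}{|\mathrm{Stab}_{S_n}(\Delta_{\mathcal D})|}\sum_{\sigma\in S_n}\sigma(\mu_{\Delta_{\mathcal D}})\in H^{|E\mathcal D|}(\mathbb{Z}\mathcal{A}_n;\mathbb{Q}_{\mathrm{sgn}})$, for $\mathcal D$ ranging over $\mathcal{D}^{\mathrm{sgn}}_n$, form a basis of $H^\bullet(\Gamma_n;\mathbb{Q}_{\mathrm{sgn}})$, identified with the subspace $H^\bullet(\mathbb{Z}\mathcal{A}_n;\mathbb{Q}_{\mathrm{sgn}})^{S_n}$ of $H^\bullet(\mathbb{Z}\mathcal{A}_n;\mathbb{Q}_{\mathrm{sgn}})$.
   Context: $\mathrm{Br}_n$ is the braid group on $n$ strands, $P_n$ the pure braid group, $\Gamma_n=\mathrm{Br}_n/[P_n,P_n]$, $\mathbb{Z}\mathcal{A}_n=P_n/[P_n,P_n]$, normal in $\Gamma_n$ with quotient $S_n$. $\mathbb{Q}_{\mathrm{sgn}}$ is the sign representation of $S_n$ viewed as a $\Gamma_n$-module (trivial on $\mathbb{Z}\mathcal A_n$); $H^\bullet(\Gamma_n;\mathbb{Q}_{\mathrm{sgn}})$ is identified via restriction with $H^\bullet(\mathbb{Z}\mathcal{A}_n;\mathbb{Q}_{\mathrm{sgn}})^{S_n}$. As $S_n$-module $H^\bullet(\mathbb{Z}\mathcal{A}_n;\mathbb{Q}_{\mathrm{sgn}})=\mathbb{Q}_{\mathrm{sgn}}\otimes\Lambda^\bullet$,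 where $\Lambda^\bullet=H^\bullet(\mathbb{Z}\mathcal A_n;\mathbb{Q})$ is the exterior algebra on $\omega_{ij}$ ($1\le i<j\le n$) with $\sigma(\omega_{ij})=\omega_{\sigma(i)\sigma(j)}$ if $\sigma(i)<\sigma(j)$, $\omega_{\sigma(j)\sigma(i)}$ otherwise. For a graph $\Delta$ on $\{1,\dots,n\}$ with lexicographically ordered edges $(i_1,j_1),\dots,(i_k,j_k)$, $\mu_\Delta=\omega_{i_1j_1}\cdots\omega_{i_kj_k}$; in twisted coefficients $\sigma(\mu_\Delta)=\mathrm{sgn}(\sigma)\mathrm{sgn}_\Delta(\sigma)\mu_{\sigma(\Delta)}$, where $\mathrm{sgn}_\Delta(\sigma)$ is the sign of the bijection induced by $\sigma$ between the ordered edge lists of $\Delta$ and $\sigma(\Delta)$. A graph $\Delta$ with $n$ vertices is skew-invariant if every automorphism $\sigma$ satisfies $\mathrm{sgn}(\sigma)\mathrm{sgn}_\Delta(\sigma)=1$ ($\mathrm{sgn}(\sigma)$ the sign on vertices, $\mathrm{sgn}_\Delta(\sigma)$ the sign on edges). $\mathcal D^{\mathrm{sgn}}_n$ is the set of isomorphism classes of skew-invariant graphs with exactly $n$ vertices, with a fixed representative $\Delta_{\mathcal D}\subset K_n$ for each; $|E\mathcal D|$ is the number of edges. *)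

From HB Require Import structures.
From mathcomp Require Import all_boot all_order all_algebra all_fingroup.
Set Implicit Arguments. Unset Strict Implicit. Unset Printing Implicit Defensive.
Import GRing.Theory.
Local Open Scope ring_scope.

(* Edges of K_n on vertex set 'I_n (= {1..n} shifted): pairs (i,j) with i<j. *)
Definition edge (n : nat) := {p : 'I_n * 'I_n | (p.1 < p.2)%N}.

Definition graph (n : nat) := {set edge n}.

Definition epair n (s : {perm 'I_n}) (p : 'I_n * 'I_n) : 'I_n * 'I_n :=
  if (s p.1 < s p.2)%N then (s p.1, s p.2) else (s p.2, s p.1).

Lemma epair_lt n (s : {perm 'I_n}) (e : edge n) :
  ((epair s (val e)).1 < (epair s (val e)).2)%N.
Proof.
case: e => [[i j] /= hij]; rewrite /epair /=.
case: ifP => // /negbT; rewrite -leqNgt leq_eqVlt => /orP [/eqP h|//].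
have /perm_inj hji : s j = s i by apply: val_inj.
by move: hij; rewrite hji ltnn.
Qed.

(* sigma(omega_ij) = omega_{sigma(i) sigma(j)} or omega_{sigma(j) sigma(i)} *)
Definition eact n (s : {perm 'I_n}) (e : edge n) : edge n :=
  exist _ (epair s (val e)) (epair_lt s e).

Definition gact n (s : {perm 'I_n}) (D : graph n) : graph n := eact s @: D.

Definition elt n (e f : edge n) : bool :=
  ((val e).1 < (val f).1)%N ||
  (((val e).1 == (val f).1) && ((val e).2 < (val f).2)%N).

(* sgn_Delta(sigma): sign of the bijection induced by sigma between the
   lexicographically ordered edge lists of Delta and sigma(Delta),
   computed as (-1)^(number of inversions). *)
Definition sgnE n (s : {perm 'I_n}) (D : graph n) : rat :=
  (-1) ^+ #|[set p : edge n * edge n |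
             [&& p.1 \in D, p.2 \in D, elt p.1 p.2 & elt (eact s p.2) (eact s p.1)]]|.

Definition sgnV n (s : {perm 'I_n}) : rat := (-1) ^+ odd_perm s.

(* H^*(ZA_n; Q_sgn) = Q_sgn (x) Lambda^*, written in the monomial basis mu_Delta:
   an element is the family of its coordinates. *)
Definition coh (n : nat) := {ffun graph n -> rat^o}.

Definition mu n (D : graph n) : coh n := [ffun G => (G == D)%:R].

Definition act n (s : {perm 'I_n}) (v : coh n) : coh n :=
  \sum_(D : graph n) (v D * (sgnV s * sgnE s D)) *: mu (gact s D).

Definition sn_invariant n (v : coh n) : Prop := forall s : {perm 'I_n}, act s v = v.

Definition stab n (D : graph n) : {set {perm 'I_n}} := [set s | gact s D == D].

Definition alpha n (D : graph n) : coh n :=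
  (#|stab D|%:R)^-1 *: \sum_(s : {perm 'I_n}) act s (mu D).

Definition giso n (D D' : graph n) : Prop := exists s : {perm 'I_n}, gact s D = D'.

Definition skew_invariant n (D : graph n) : Prop :=
  forall s : {perm 'I_n}, gact s D = D -> sgnV s * sgnE s D = 1.

(* reps is a system of representatives Delta_D of D^sgn_n *)
Definition skew_reps n (reps : seq (graph n)) : Prop :=
  [/\ forall D, D \in reps -> skew_invariant D,
      forall D, skew_invariant D -> exists2 D', D' \in reps & giso D D',
      uniq reps &
      forall D D', D \in reps -> D' \in reps -> giso D D' -> D = D'].

From Pilot Require Import Defs.
From HB Require Import structures.
From mathcomp Require Import all_boot all_order all_algebra all_fingroup.
Import GRing.Theory Num.Theory.
(* Re-import so that [gact] is the action on graphs, not the one of fingroup/action.v. *)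
Import Defs.
Local Open Scope ring_scope.
Set Implicit Arguments. Unset Strict Implicit. Unset Printing Implicit Defensive.

(* The twisted action sends mu_D to c(s, D) mu_(sD), where c(s, D) = sgn(s) sgn_D(s)
   satisfies the cocycle rule c(st, D) = c(s, D) c(t, sD); for sgn_D this holds because
   sgn_D(s) is a product, over the pairs of edges of D, of the sign recording whether s
   reverses the pair, and such a product does not depend on how the pairs are oriented.
   Thus v is invariant iff v(sD) = c(s, D) v(D) for all s and D. An invariant v vanishes
   at every graph that is not skew-invariant and is determined on each orbit by one value,
   while alpha_D is invariant, equal to 1 at D and zero off the orbit of D; so the
   invariants are exactly the combinations sum_D v(D) alpha_D over the representatives. *)

Definition tournament (T : eqType) (r : rel T) := forall x y, r x y = (x != y) && ~~ r y x.

Lemma tournament_preim (T U : eqType) (r : rel U) (f : T -> U) :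
  tournament r -> injective f -> tournament (fun x y => r (f x) (f y)).
Proof. by move=> r_tour f_inj x y; rewrite r_tour (inj_eq f_inj). Qed.

Lemma big_tournament (R : Type) (idx : R) (op : Monoid.com_law idx) (T : finType)
    (A : {set T}) (F : T -> T -> R) (r1 r2 : rel T) :
  (forall x y, F x y = F y x) -> tournament r1 -> tournament r2 ->
  \big[op/idx]_(p : T * T | [&& p.1 \in A, p.2 \in A & r1 p.1 p.2]) F p.1 p.2 =
  \big[op/idx]_(p : T * T | [&& p.1 \in A, p.2 \in A & r2 p.1 p.2]) F p.1 p.2.
Proof.
move=> F_sym r1_tour r2_tour.
rewrite (bigID (fun p : T * T => r2 p.1 p.2)) [RHS](bigID (fun p : T * T => r1 p.1 p.2)) /=.
congr (op _ _).
  by apply: eq_bigl => p; rewrite -!andbA; do 2 congr (_ && _); rewrite andbC.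
rewrite (reindex_inj (h := fun p : T * T => (p.2, p.1))); last by move=> [? ?] [? ?] [-> ->].
apply: eq_big => [[x y]|[x y] _] /=; last exact: F_sym.
have [<-|ne_xy] := eqVneq x y; first by rewrite [r1 x x]r1_tour [r2 x x]r2_tour eqxx /= !andbF.
rewrite [r1 x y]r1_tour [r2 x y]r2_tour ne_xy /=.
by case: (x \in A) (y \in A) (r1 y x) (r2 y x) => [] [] [] [].
Qed.

Section Twist.
Variable n : nat.
Implicit Types (s t : {perm 'I_n}) (e f : edge n) (D G H : graph n) (v w : coh n).

Lemma elt_tournament : tournament (@elt n).
Proof.
move=> e f; have [<-|ne_ef] := eqVneq e f; first by rewrite /elt !ltnn eqxx.
move: ne_ef; case: e f => [[i j] lt_ij] [[k l] lt_kl] ne_ef; rewrite /elt /=.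
have [lt_ik|lt_ki|/val_inj eq_ik] := ltngtP i k.
- by rewrite -[k == i]val_eqE /= (gtn_eqF lt_ik).
- by rewrite -[i == k]val_eqE /= (gtn_eqF lt_ki).
subst k; rewrite eqxx /=.
have [//|//|/val_inj eq_jl] := ltngtP j l.
by subst l; move: ne_ef; rewrite (bool_irrelevance lt_ij lt_kl) eqxx.
Qed.

Lemma eactM s t e : eact (s * t)%g e = eact t (eact s e).
Proof.
apply: val_inj; case: e => [[i j] lt_ij]; rewrite /= /epair /= !permM.
have : s i != s j by rewrite (inj_eq perm_inj) neq_ltn lt_ij.
have : t (s i) != t (s j) by rewrite !(inj_eq perm_inj) neq_ltn lt_ij.
rewrite -!val_eqE /=.
by have [] := ltngtP (s i) (s j); have [] := ltngtP (t (s i)) (t (s j)).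
Qed.

Lemma eact1 e : eact 1 e = e.
Proof. by apply: val_inj; case: e => [[i j] lt_ij]; rewrite /= /epair /= !perm1 lt_ij. Qed.

Lemma eactK s : cancel (eact s) (eact s^-1).
Proof. by move=> e; rewrite -eactM mulgV eact1. Qed.

Lemma eact_inj s : injective (eact s).
Proof. exact: can_inj (eactK s). Qed.

Lemma gactM s t D : gact (s * t)%g D = gact t (gact s D).
Proof. by rewrite /gact -imset_comp; apply: eq_imset => e; rewrite eactM. Qed.

Lemma gact1 D : gact 1 D = D.
Proof. by rewrite /gact (eq_imset _ eact1) imset_id. Qed.

Lemma gactK s : cancel (gact s) (gact s^-1).
Proof. by move=> D; rewrite -gactM mulgV gact1. Qed.

Lemma gactVK s : cancel (gact s^-1) (gact s).
Proof. by move=> D; rewrite -gactM mulVg gact1. Qed.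

Lemma gact_inj s : injective (gact s).
Proof. exact: can_inj (gactK s). Qed.

Lemma giso_trans D G H : giso D G -> giso G H -> giso D H.
Proof. by move=> [s <-] [t <-]; exists (s * t)%g; rewrite gactM. Qed.

Lemma giso_sym D G : giso D G -> giso G D.
Proof. by move=> [s <-]; exists s^-1%g; rewrite gactK. Qed.

Lemma gisoP D G : reflect (giso D G) [exists s, gact s D == G].
Proof. by apply: (iffP existsP) => [] [s /eqP]; exists s. Qed.

Definition osign e f : rat := if elt e f then 1 else -1.

(* Symmetric in [e f], so that products over oriented pairs of edges
   can be reoriented with [big_tournament]. *)
Definition pair_sign s e f := osign (eact s e) (eact s f) * osign e f.

Lemma osignC e f : e != f -> osign f e = - osign e f.
Proof.
by move=> ne_ef; rewrite /osign [elt e f]elt_tournament ne_ef; case: (elt f e); rewrite ?opprK.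
Qed.

Lemma osign_sqr e f : osign e f * osign e f = 1.
Proof. by rewrite /osign; case: (elt e f); rewrite ?mulrNN mulr1. Qed.

Lemma pair_signC s e f : pair_sign s e f = pair_sign s f e.
Proof.
have [-> //|ne_ef] := eqVneq e f.
have ne_sef : eact s e != eact s f by rewrite (inj_eq (@eact_inj s)).
by rewrite /pair_sign (osignC ne_ef) (osignC ne_sef) mulrNN.
Qed.

Lemma pair_signM s t e f :
  pair_sign (s * t)%g e f = pair_sign s e f * pair_sign t (eact s e) (eact s f).
Proof.
rewrite /pair_sign !eactM [osign (eact t _) _ * _ in RHS]mulrC.
by rewrite mulrACA osign_sqr mul1r mulrC.
Qed.

Lemma sgnE_prod s D : sgnE s D =
  \prod_(p : edge n * edge n | [&& p.1 \in D, p.2 \in D & elt p.1 p.2]) pair_sign s p.1 p.2.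
Proof.
rewrite /sgnE -prodr_const.
rewrite (eq_bigl (fun p : edge n * edge n => [&& p.1 \in D, p.2 \in D & elt p.1 p.2]
                  && elt (eact s p.2) (eact s p.1))); last by move=> p; rewrite in_set !andbA.
rewrite big_mkcondr /=; apply: eq_bigr => [[e f]] /and3P [_ _ lt_ef] /=.
rewrite /pair_sign /osign lt_ef mulr1 [elt (eact s e) _]elt_tournament.
rewrite (inj_eq (@eact_inj s)).
have -> : e != f by apply: contraTneq lt_ef => ->; rewrite [elt f f]elt_tournament eqxx.
by case: (elt _ _).
Qed.

Lemma sgnEM s t D : sgnE (s * t)%g D = sgnE s D * sgnE t (gact s D).
Proof.
rewrite !sgnE_prod (eq_bigr _ (fun p _ => pair_signM s t p.1 p.2)) big_split /=.
congr (_ * _).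
(* Reindexing by [eact s] orients the pairs of edges of D by the pullback of [elt]. *)
rewrite [RHS](reindex_inj (h := fun p : edge n * edge n => (eact s p.1, eact s p.2))) /=;
  last by apply: (can_inj (g := fun p => (eact s^-1 p.1, eact s^-1 p.2))) => -[? ?] /=;
          rewrite !eactK.
rewrite [RHS](eq_bigl (fun p : edge n * edge n =>
                  [&& p.1 \in D, p.2 \in D & elt (eact s p.1) (eact s p.2)])); last first.
  by move=> p; rewrite /gact !mem_imset //; apply: eact_inj.
apply: (@big_tournament _ _ _ _ D (fun e f => pair_sign t (eact s e) (eact s f)) (@elt n)
          (fun e f => elt (eact s e) (eact s f))).
- by move=> e f; apply: pair_signC.
- exact: elt_tournament.
- exact: tournament_preim elt_tournament (@eact_inj s).
Qed.

Definition twist s D := sgnV s * sgnE s D.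

Lemma twistM s t D : twist (s * t)%g D = twist s D * twist t (gact s D).
Proof. by rewrite /twist sgnEM /sgnV odd_permM signr_addb mulrACA. Qed.

Lemma cohZE (a : rat) v G : (a *: v) G = a * v G.
Proof. by rewrite ffunE. Qed.

Lemma act_gact s v D : act s v (gact s D) = twist s D * v D.
Proof.
rewrite /act sum_ffunE (bigD1 D) //= big1 => [|G ne_GD].
  by rewrite cohZE ffunE eqxx mulr1 addr0 mulrC.
by rewrite cohZE ffunE (inj_eq (@gact_inj s)) eq_sym (negbTE ne_GD) mulr0.
Qed.

Lemma sn_invariantP v :
  sn_invariant v <-> forall s D, v (gact s D) = twist s D * v D.
Proof.
split=> [v_inv s D | v_twist s]; first by rewrite -act_gact v_inv.
apply/ffunP => G; have [H ->] : exists H, G = gact s H by exists (gact s^-1 G); rewrite gactVK.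
by rewrite act_gact v_twist.
Qed.

Lemma alphaE D G :
  alpha D G = (#|stab D|%:R)^-1 * \sum_(s | gact s D == G) twist s D.
Proof.
rewrite /alpha ffunE sum_ffunE [in RHS]big_mkcond; congr (_ * _).
apply: eq_bigr => s _; rewrite -{1}(gactVK s G) act_gact ffunE.
have [<-|ne_sDG] := eqVneq (gact s D) G; first by rewrite gactK eqxx mulr1.
suff /negbTE -> : gact s^-1 G != D by rewrite mulr0.
by apply: contra_neq ne_sDG => <-; rewrite gactVK.
Qed.

Lemma alpha_invariant D : sn_invariant (alpha D).
Proof.
apply/sn_invariantP => t G; rewrite !alphaE mulrCA; congr (_ * _); rewrite mulr_sumr.
rewrite (reindex_inj (h := fun s => (s * t)%g) (mulIg t)) /=; apply: eq_big => s.
  by rewrite gactM (inj_eq (@gact_inj t)).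
by rewrite gactM => /eqP/gact_inj <-; rewrite twistM mulrC.
Qed.

Lemma alpha_self D : skew_invariant D -> alpha D D = 1.
Proof.
move=> D_skew; rewrite alphaE (eq_bigr (fun _ => 1)) => [|s /eqP]; last exact: D_skew.
rewrite (eq_bigl (fun s => s \in stab D)) => [|s]; last by rewrite inE.
rewrite sumr_const mulVf // pnatr_eq0 -lt0n; apply/card_gt0P.
by exists 1%g; rewrite inE gact1.
Qed.

Lemma alpha_out D G : ~ giso D G -> alpha D G = 0.
Proof.
move=> not_iso; rewrite alphaE big_pred0 ?mulr0 // => s.
by apply/negbTE/eqP => sD; apply: not_iso; exists s.
Qed.

Lemma sn_invariant_giso v w D G :
  sn_invariant v -> sn_invariant w -> giso D G -> v D * w G = v G * w D.
Proof.
move=> /sn_invariantP v_inv /sn_invariantP w_inv [s <-].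
by rewrite v_inv w_inv mulrCA mulrA.
Qed.

Lemma sn_invariant_skew v G : sn_invariant v -> v G != 0 -> skew_invariant G.
Proof.
move=> /sn_invariantP v_inv vG_neq0 s sG.
by apply: (mulIf vG_neq0); rewrite -v_inv sG mul1r.
Qed.

End Twist.

Section Representatives.
Variables (n : nat) (reps : seq (graph n)).
Hypothesis reps_skew : forall D, D \in reps -> skew_invariant D.
Hypothesis reps_cover : forall D, skew_invariant D -> exists2 D', D' \in reps & giso D D'.
Hypothesis reps_uniq : uniq reps.
Hypothesis reps_noniso :
  forall D D', D \in reps -> D' \in reps -> giso D D' -> D = D'.

Lemma alpha_reps D D' : D \in reps -> D' \in reps -> alpha D D' = (D == D')%:R.
Proof.
move=> D_rep D'_rep; have [<-|ne_DD'] := eqVneq D D'; first exact: alpha_self (reps_skew D_rep).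
by rewrite alpha_out // => iso_DD'; rewrite (reps_noniso D_rep D'_rep iso_DD') eqxx in ne_DD'.
Qed.

Lemma free_alpha_reps : free [seq alpha D | D <- reps].
Proof.
apply/(@freeP _ _ _ (in_tuple [seq alpha D | D <- reps])) => k k_sum i.
have lt_size (j : 'I_(size [seq alpha D | D <- reps])) : (j < size reps)%N.
  by rewrite -(size_map (@alpha n)).
have /ffunP/(_ (nth set0 reps i)) := k_sum; rewrite sum_ffunE ffunE.
rewrite (bigD1 i) //= big1 => [|j ne_ji];
  rewrite cohZE (nth_map set0) ?lt_size // alpha_reps ?mem_nth ?lt_size //.
  by rewrite eqxx mulr1 addr0.
by rewrite nth_uniq ?lt_size // -[_ == _]/(j == i) (negbTE ne_ji) mulr0.
Qed.

Lemma sn_invariant_sum_alpha v : sn_invariant v -> v = \sum_(D <- reps) v D *: alpha D.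
Proof.
move=> v_inv; apply/ffunP => G; rewrite sum_ffunE.
have term_iso D : D \in reps -> giso D G -> (v D *: alpha D) G = v G.
  move=> D_rep iso_DG; rewrite cohZE (sn_invariant_giso v_inv (alpha_invariant D) iso_DG).
  by rewrite alpha_self ?mulr1 //; apply: reps_skew.
have term_out D : ~ giso D G -> (v D *: alpha D) G = 0.
  by move=> not_iso; rewrite cohZE alpha_out ?mulr0.
have [vG0|vG_neq0] := eqVneq (v G) 0.
  rewrite vG0 big_seq big1 // => D D_rep.
  by have [/(term_iso _ D_rep) ->|/term_out] := gisoP D G.
have [D' D'_rep iso_GD'] := reps_cover (sn_invariant_skew v_inv vG_neq0).
rewrite (bigD1_seq D') //= (term_iso _ D'_rep (giso_sym iso_GD')).
rewrite big_seq_cond big1 ?addr0 // => D /andP [D_rep ne_DD']; apply: term_out => iso_DG.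
by rewrite (reps_noniso D_rep D'_rep (giso_trans iso_DG iso_GD')) eqxx in ne_DD'.
Qed.

End Representatives.

Theorem theorem2p21 (n : nat) (hn : (1 <= n)%N) (reps : seq (graph n)) :
  skew_reps reps ->
  [/\ forall D, D \in reps -> sn_invariant (alpha D),
      free [seq alpha D | D <- reps] &
      forall v : coh n, sn_invariant v -> v \in <<[seq alpha D | D <- reps]>>%VS].
Proof.
move=> [reps_skew reps_cover reps_uniq reps_noniso]; split.
- by move=> D _; apply: alpha_invariant.
- exact: free_alpha_reps.
move=> v v_inv; rewrite (sn_invariant_sum_alpha reps_skew reps_cover reps_uniq reps_noniso v_inv).
by rewrite big_seq; apply: rpred_sum => D D_rep; apply/rpredZ/memv_span/map_f.
Qed.
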